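(* Every implicational formula is classically equivalent (i.e. has the same truth value under every Boolean valuation) to an implicational formula of order at most three.
   Context: Implicational formulas are built from propositional variables using $\to$ only. Order: an atom has order $0$, and $r(\sigma\to\tau)=\max(r(\tau),r(\sigma)+1)$. *)

From Stdlib Require Import Arith.

Inductive form : Type :=
| Var : nat -> form
| Imp : form -> form -> form.

Fixpoint order (f : form) : nat :=
  match f with
  | Var _ => 0
  | Imp s t => Nat.max (order t) (S (order s))
  end.

Fixpoint beval (v : nat -> bool) (f : form) : bool :=
  match f with
  | Var n => v n
  | Imp s t => implb (beval v s) (beval v t)
  end.

Definition class_equiv (f g : form) : Prop :=
  forall v : nat -> bool, beval v f = beval v g.

(* If the head variable p of f (the atom at the end of its rightmost spine)
   is true, so is f.  If p is false, p acts as falsum: ~x is x -> p, a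
   negated conjunction of literals is l1 -> ... -> lk -> p (order 2), and a
   disjunction t1 \/ ... \/ tm is ~t1 -> ... -> ~tm -> p (order 3).  So the
   order-3 formula obtained in this way from a DNF of f is classically
   equivalent to f under every valuation. *)
From Stdlib Require Import List Bool Lia.
Import ListNotations.

Inductive lit : Type := Pos (x : nat) | Neg (x : nat).

Definition eval_lit (v : nat -> bool) (l : lit) : bool :=
  match l with Pos x => v x | Neg x => negb (v x) end.

Definition dnf : Type := list (list lit).

Definition eval_dnf (v : nat -> bool) (D : dnf) : bool :=
  existsb (forallb (eval_lit v)) D.

Definition dnf_conj (D E : dnf) : dnf :=
  flat_map (fun t => map (fun u => t ++ u) E) D.

Lemma eval_dnf_app v D E : eval_dnf v (D ++ E) = eval_dnf v D || eval_dnf v E.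
Proof. apply existsb_app. Qed.

Lemma eval_dnf_map_app v t E :
  eval_dnf v (map (fun u => t ++ u) E) = forallb (eval_lit v) t && eval_dnf v E.
Proof.
  unfold eval_dnf. induction E as [|u E IH]; simpl; [now rewrite andb_false_r|].
  now rewrite forallb_app, IH, andb_orb_distrib_r.
Qed.

Lemma eval_dnf_conj v D E : eval_dnf v (dnf_conj D E) = eval_dnf v D && eval_dnf v E.
Proof.
  induction D as [|t D IH]; [reflexivity|].
  unfold dnf_conj in *; simpl flat_map.
  rewrite eval_dnf_app, IH, eval_dnf_map_app.
  unfold eval_dnf; simpl. now rewrite andb_orb_distrib_l.
Qed.

(* Computes DNFs of f and of its negation simultaneously, since the
   negation of s -> t is s /\ ~t. *)
Fixpoint dnf_pair (f : form) : dnf * dnf :=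
  match f with
  | Var x => ([[Pos x]], [[Neg x]])
  | Imp s t => (snd (dnf_pair s) ++ fst (dnf_pair t),
                dnf_conj (fst (dnf_pair s)) (snd (dnf_pair t)))
  end.

Lemma dnf_pair_correct v f :
  eval_dnf v (fst (dnf_pair f)) = beval v f /\
  eval_dnf v (snd (dnf_pair f)) = negb (beval v f).
Proof.
  induction f as [x|s [IHs IHns] t [IHt IHnt]]; simpl.
  - unfold eval_dnf; simpl. now destruct (v x).
  - rewrite eval_dnf_app, eval_dnf_conj, IHs, IHns, IHt, IHnt.
    now destruct (beval v s), (beval v t).
Qed.

Definition imps (gs : list form) (c : form) : form := fold_right Imp c gs.

Lemma beval_imps v gs c :
  beval v (imps gs c) = implb (forallb (beval v) gs) (beval v c).
Proof.
  induction gs as [|g gs IH]; simpl; [reflexivity|].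
  rewrite IH. now destruct (beval v g), (forallb (beval v) gs), (beval v c).
Qed.

Lemma order_imps_var n gs p :
  Forall (fun g => order g <= n) gs -> order (imps gs (Var p)) <= S n.
Proof.
  induction 1 as [|g gs Hg _ IH]; simpl in *; lia.
Qed.

Section FalsumEncoding.

Variable p : nat.

Definition lit_form (l : lit) : form :=
  match l with Pos x => Var x | Neg x => Imp (Var x) (Var p) end.

Definition neg_conj_form (t : list lit) : form := imps (map lit_form t) (Var p).

Definition dnf_form (D : dnf) : form := imps (map neg_conj_form D) (Var p).

Lemma order_lit_form l : order (lit_form l) <= 1.
Proof. destruct l; simpl; lia. Qed.

Lemma order_neg_conj_form t : order (neg_conj_form t) <= 2.
Proof.
  apply order_imps_var, Forall_map, Forall_forall.
  intros l _. apply order_lit_form.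
Qed.

Lemma order_dnf_form D : order (dnf_form D) <= 3.
Proof.
  apply order_imps_var, Forall_map, Forall_forall.
  intros t _. apply order_neg_conj_form.
Qed.

Section FalsePivot.

Variable v : nat -> bool.
Hypothesis v_p : v p = false.

Lemma beval_imps_pivot gs :
  beval v (imps gs (Var p)) = negb (forallb (beval v) gs).
Proof. rewrite beval_imps; simpl. rewrite v_p. apply implb_false_r. Qed.

Lemma beval_lit_form l : beval v (lit_form l) = eval_lit v l.
Proof. destruct l as [x|x]; simpl; [reflexivity|]. rewrite v_p. apply implb_false_r. Qed.

Lemma beval_neg_conj_form t : beval v (neg_conj_form t) = negb (forallb (eval_lit v) t).
Proof.
  unfold neg_conj_form. rewrite beval_imps_pivot. f_equal.
  induction t as [|l t IH]; simpl; [reflexivity|].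
  now rewrite beval_lit_form, IH.
Qed.

Lemma beval_dnf_form D : beval v (dnf_form D) = eval_dnf v D.
Proof.
  unfold dnf_form, eval_dnf. rewrite beval_imps_pivot.
  induction D as [|t D IH]; simpl; [reflexivity|].
  now rewrite negb_andb, beval_neg_conj_form, negb_involutive, IH.
Qed.

End FalsePivot.

Lemma beval_dnf_form_true v D : v p = true -> beval v (dnf_form D) = true.
Proof.
  intro v_p. unfold dnf_form. rewrite beval_imps; simpl. rewrite v_p. apply implb_true_r.
Qed.

End FalsumEncoding.

Fixpoint head_var (f : form) : nat :=
  match f with Var x => x | Imp _ t => head_var t end.

Lemma beval_head_var_true v f : v (head_var f) = true -> beval v f = true.
Proof.
  induction f as [x|s _ t IHt]; simpl; intro H; [exact H|].
  rewrite IHt by exact H. apply implb_true_r.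
Qed.

Theorem proposition4p3 :
  forall f : form, exists g : form, order g <= 3 /\ class_equiv f g.
Proof.
  intro f. exists (dnf_form (head_var f) (fst (dnf_pair f))).
  split; [apply order_dnf_form|].
  intro v. destruct (v (head_var f)) eqn:Hp.
  - now rewrite beval_head_var_true, beval_dnf_form_true.
  - rewrite beval_dnf_form by exact Hp. symmetry. apply dnf_pair_correct.
Qed.
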